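(* Let $X_1,\ldots,X_n$ be $\{0,1\}$-valued random variables satisfying negative regression. Let $K\subseteq[n]$, $a_K\in\{0,1\}^K$, and $i\in[n]\setminus K$ with $\Pr[X_K=a_K,X_i=0]>0$ and $\Pr[X_K=a_K,X_i=1]>0$. Let $L=[n]\setminus(K\cup\{i\})$ and for $c\in\{0,1\}$ let $\mu^{(c)}$ be the distribution on $\{0,1\}^L$ given by $\mu^{(c)}(x)=\Pr[X_L=x\mid X_K=a_K,X_i=c]$. Then there exists a function $\nu:\{0,1\}^L\times\{0,1\}^L\to[0,1]$ such that $\mu^{(1)}(x)=\sum_{y}\nu(x,y)$ for all $x$, $\mu^{(0)}(y)=\sum_x\nu(x,y)$ for all $y$, and $\nu(x,y)=0$ unless $x\le y$ coordinatewise.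
   Context: For $S\subseteq[n]$, $X_S\in\{0,1\}^S$ denotes the tuple $(X_i)_{i\in S}$. The variables $X_1,\ldots,X_n$ satisfy negative regression if for all disjoint $I,J\subseteq[n]$, every non-decreasing function $g:\{0,1\}^I\to\mathbb{R}$, and all $a\le b$ in $\{0,1\}^J$ (coordinatewise) such that $\Pr[X_J=a]>0$ and $\Pr[X_J=b]>0$, we have $\mathbb{E}[g(X_I)\mid X_J=a]\ge \mathbb{E}[g(X_I)\mid X_J=b]$. *)

From HB Require Import structures.
From mathcomp Require Import all_boot all_order all_algebra.
Set Implicit Arguments. Unset Strict Implicit. Unset Printing Implicit Defensive.
Import Order.TTheory GRing.Theory Num.Theory.
Local Open Scope ring_scope.

Definition cube (n : nat) := {ffun 'I_n -> bool}.

Definition subcube (n : nat) (S : {set 'I_n}) := {ffun {i : 'I_n | i \in S} -> bool}.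

(* X_S evaluated at outcome w *)
Definition restr (n : nat) (S : {set 'I_n}) (w : cube n) : subcube S :=
  [ffun j => w (val j)].

Definition cw_le (n : nat) (S : {set 'I_n}) (x y : subcube S) : bool :=
  [forall j, x j ==> y j].

(* p is the joint probability mass function of (X_1,...,X_n) *)
Definition is_dist (R : realFieldType) (n : nat) (p : cube n -> R) : Prop :=
  (forall w, 0 <= p w) /\ \sum_(w : cube n) p w = 1.

Definition Pr (R : realFieldType) (n : nat) (p : cube n -> R) (E : pred (cube n)) : R :=
  \sum_(w : cube n | E w) p w.

Definition condE (R : realFieldType) (n : nat) (p : cube n -> R)
  (I J : {set 'I_n}) (g : subcube I -> R) (a : subcube J) : R :=
  (\sum_(w : cube n | restr J w == a) p w * g (restr I w))
    / Pr p (fun w => restr J w == a).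

Definition nondecreasing_fun (R : realFieldType) (n : nat) (I : {set 'I_n})
  (g : subcube I -> R) : Prop :=
  forall x y : subcube I, cw_le x y -> g x <= g y.

Definition negative_regression (R : realFieldType) (n : nat) (p : cube n -> R) : Prop :=
  forall (I J : {set 'I_n}), [disjoint I & J] ->
  forall (g : subcube I -> R), nondecreasing_fun g ->
  forall (a b : subcube J), cw_le a b ->
    0 < Pr p (fun w => restr J w == a) ->
    0 < Pr p (fun w => restr J w == b) ->
    condE p g b <= condE p g a.

Definition mu (R : realFieldType) (n : nat) (p : cube n -> R) (K : {set 'I_n})
  (aK : subcube K) (i : 'I_n) (c : bool) (L : {set 'I_n}) (x : subcube L) : R :=
  Pr p (fun w => [&& restr L w == x, restr K w == aK & w i == c])
   / Pr p (fun w => (restr K w == aK) && (w i == c)).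

From HB Require Import structures.
From mathcomp Require Import all_boot all_order all_algebra.
From mathcomp Require Import lra.
Set Implicit Arguments. Unset Strict Implicit. Unset Printing Implicit Defensive.
Import Order.TTheory GRing.Theory Num.Theory.
Local Open Scope ring_scope.

(* Negative regression, applied to indicators of upward closed sets U of
   {0,1}^L, says mu1(U) <= mu0(U): mu1 is stochastically dominated by mu0.
   Strassen's theorem turns this into a monotone coupling.  On a finite poset
   it is the supply-demand (weighted Hall) theorem for the bipartite graph of
   the order: if every set A of sources has mu(A) <= nu(N(A)), then mu can be
   transported along edges within the capacities nu.  That theorem is proved
   by induction on the sizes of the supports of mu and nu: push along an edge
   (a, b) as much mass as Hall's condition allows; then a or b leaves the
   support, or some set becomes tight and the problem splits into two smaller
   ones. *)

Lemma bigmin_attained (d : Order.disp_t) (T : orderType d) (I : finType)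
    (P : pred I) (F : I -> T) (x : T) :
  \big[Order.min/x]_(i | P i) F i = x \/
  exists2 i, P i & \big[Order.min/x]_(i | P i) F i = F i.
Proof.
apply: (big_ind (fun v => v = x \/ exists2 i, P i & v = F i)); first by left.
  by move=> u v hu hv; rewrite minEle; case: ifP.
by move=> i Pi; right; exists i.
Qed.

Lemma ler_term_sum (R : numDomainType) (I : finType) (F : I -> R) (j : I) :
  (forall i, 0 <= F i) -> F j <= \sum_i F i.
Proof. by move=> F_ge0; rewrite (bigD1 j) //= lerDl sumr_ge0. Qed.

Lemma ler_sum_subset (R : numDomainType) (I : finType) (A B : {set I}) (F : I -> R) :
  A \subset B -> (forall i, 0 <= F i) -> \sum_(i in A) F i <= \sum_(i in B) F i.
Proof.
move=> AB F_ge0; rewrite [leRHS](big_setID A) /= (setIidPr AB) lerDl.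
exact: sumr_ge0.
Qed.

Lemma sum_setUD (R : nmodType) (I : finType) (A B : {set I}) (F : I -> R) :
  \sum_(i in A :|: B) F i = \sum_(i in A :\: B) F i + \sum_(i in B) F i.
Proof.
rewrite (big_setID B) addrC.
by congr (_ + _); apply: eq_bigl => i; rewrite !inE; case: (i \in A); case: (i \in B).
Qed.

(** * Weighted Hall theorem *)

Section Transport.
Variables (R : realFieldType) (T : finType) (E : rel T).
Implicit Types (mu nu f : T -> R) (A B : {set T}) (pi : T -> T -> R).

Definition neighbours A : {set T} := [set y | [exists x in A, E x y]].

Definition hall_cond mu nu :=
  forall A, \sum_(x in A) mu x <= \sum_(y in neighbours A) nu y.

Definition transport mu nu pi :=
  [/\ forall x y, 0 <= pi x y, forall x y, ~~ E x y -> pi x y = 0,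
      forall x, \sum_y pi x y = mu x & forall y, \sum_x pi x y <= nu y].

Definition supp f : {set T} := [set x | f x != 0].

Definition restrict A f x := if x \in A then f x else 0.

Definition dirac (a : T) (t : R) x := if x == a then t else 0.

Definition slack mu nu A := \sum_(y in neighbours A) nu y - \sum_(x in A) mu x.

Lemma neighboursS A B : A \subset B -> neighbours A \subset neighbours B.
Proof.
move=> /subsetP AB; apply/subsetP=> y; rewrite !inE => /existsP [x /andP [xA Exy]].
by apply/existsP; exists x; rewrite AB.
Qed.

Lemma neighboursU A B : neighbours (A :|: B) = neighbours A :|: neighbours B.
Proof.
apply/setP=> y; rewrite !inE; apply/existsP/orP.
  by case=> x /andP []; rewrite inE => /orP [] xAB Exy; [left|right];
     apply/existsP; exists x; rewrite xAB.
by case=> /existsP [x /andP [xAB Exy]]; exists x; rewrite inE xAB ?orbT.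
Qed.

Lemma sum_restrict A B f :
  \sum_(x in B) restrict A f x = \sum_(x in B :&: A) f x.
Proof.
rewrite big_mkcond [RHS]big_mkcond; apply: eq_bigr => x _.
by rewrite /restrict inE; case: (x \in B); case: (x \in A).
Qed.

Lemma sum_dirac A a t : \sum_(x in A) dirac a t x = if a \in A then t else 0.
Proof.
rewrite big_mkcond (bigD1 a) //= big1 ?addr0; first by rewrite /dirac eqxx.
by move=> x /negbTE xa; rewrite /dirac xa if_same.
Qed.

Lemma add_restrictC A f x : restrict A f x + restrict (~: A) f x = f x.
Proof. by rewrite /restrict inE; case: (x \in A); rewrite ?addr0 ?add0r. Qed.

Lemma supp_restrict A f : supp (restrict A f) = supp f :&: A.
Proof. by apply/setP=> x; rewrite !inE /restrict; case: (x \in A); rewrite ?andbT ?andbF ?eqxx. Qed.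

Lemma supp_subr_dirac f a t : a \in supp f -> supp (f \- dirac a t) \subset supp f.
Proof.
move=> a_supp; apply/subsetP=> x; rewrite [x \in supp _]inE /= /dirac.
by have [->|_] := eqVneq x a; rewrite // subr0 inE.
Qed.

Lemma card_supp_restrict_lt A f x : x \in supp f -> x \notin A ->
  (#|supp (restrict A f)| < #|supp f|)%N.
Proof.
move=> x_supp xA; rewrite supp_restrict; apply/proper_card/properP.
by split; [exact: subsetIl | exists x; rewrite // inE (negbTE xA) andbF].
Qed.

Lemma card_supp_restrict_le A f : (#|supp (restrict A f)| <= #|supp f|)%N.
Proof. by rewrite supp_restrict subset_leq_card // subsetIl. Qed.

Lemma card_supp_subr_dirac_le f a t : a \in supp f ->
  (#|supp (f \- dirac a t)| <= #|supp f|)%N.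
Proof. by move=> a_supp; rewrite subset_leq_card // supp_subr_dirac. Qed.

Lemma card_supp_subr_dirac_lt f a : a \in supp f ->
  (#|supp (f \- dirac a (f a))| < #|supp f|)%N.
Proof.
move=> a_supp; apply/proper_card/properP; split; first exact: supp_subr_dirac.
by exists a; rewrite // inE /= /dirac eqxx subrr eqxx.
Qed.

Lemma transport0 mu nu : (forall x, mu x = 0) -> (forall y, 0 <= nu y) ->
  transport mu nu (fun _ _ => 0).
Proof. by move=> mu0 nu_ge0; split=> // [x|y]; rewrite big1 ?mu0. Qed.

Lemma eq_transport mu nu mu' nu' pi : mu =1 mu' -> nu =1 nu' ->
  transport mu nu pi -> transport mu' nu' pi.
Proof. by move=> emu enu [? ? rows cols]; split=> // [x|y]; rewrite -?emu -?enu. Qed.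

Lemma transport_add mu1 nu1 pi1 mu2 nu2 pi2 :
  transport mu1 nu1 pi1 -> transport mu2 nu2 pi2 ->
  transport (mu1 \+ mu2) (nu1 \+ nu2) (fun x y => pi1 x y + pi2 x y).
Proof.
move=> [ge1 E1 rows1 cols1] [ge2 E2 rows2 cols2]; split=> [x y|x y nExy|x|y].
- exact: addr_ge0.
- by rewrite E1 ?E2 ?addr0.
- by rewrite big_split /= rows1 rows2.
- by rewrite big_split lerD.
Qed.

Lemma transport_dirac a b t : E a b -> 0 <= t ->
  transport (dirac a t) (dirac b t) (fun x y => if (x == a) && (y == b) then t else 0).
Proof.
move=> Eab t_ge0; split=> [x y|x y|x|y].
- by case: ifP.
- by case: ifP => // /andP [/eqP -> /eqP ->]; rewrite Eab.
- rewrite /dirac; case: eqP => _ /=; last by rewrite big1.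
  by rewrite -big_mkcond big_pred1_eq.
- rewrite /dirac; case: eqP => _; last by rewrite big1 // => x; rewrite andbF.
  by rewrite -big_mkcond (eq_bigl _ _ (fun x => andbT (x == a))) big_pred1_eq.
Qed.

Lemma hall_restrict A mu nu : (forall y, 0 <= nu y) -> hall_cond mu nu ->
  hall_cond (restrict A mu) (restrict (neighbours A) nu).
Proof.
move=> nu_ge0 hall B; rewrite !sum_restrict; apply: le_trans (hall _) _.
by apply: ler_sum_subset => //; rewrite subsetI !neighboursS ?subsetIl ?subsetIr.
Qed.

Lemma hall_restrictC A mu nu : hall_cond mu nu ->
  \sum_(x in A) mu x = \sum_(y in neighbours A) nu y ->
  hall_cond (restrict (~: A) mu) (restrict (~: neighbours A) nu).
Proof.
move=> hall tight B; rewrite !sum_restrict -!setDE.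
by have := hall (B :|: A); rewrite neighboursU !sum_setUD tight lerD2r.
Qed.

Lemma hall_edge mu nu a : (forall y, 0 <= nu y) -> hall_cond mu nu -> 0 < mu a ->
  exists2 b, E a b & 0 < nu b.
Proof.
move=> nu_ge0 hall mu_a; have := hall [set a]; rewrite big_set1.
have [/existsP [b /andP [Eab nu_b]] _|] := boolP [exists b, E a b && (0 < nu b)].
  by exists b.
rewrite negb_exists => /forallP no_edge; rewrite big1 => [|y].
  by rewrite leNgt mu_a.
rewrite inE => /existsP [x /andP [/set1P -> Eay]].
by apply/eqP; rewrite eq_le nu_ge0 andbT leNgt; have := no_edge y; rewrite Eay.
Qed.

Lemma hall_shift mu nu a b t : E a b -> hall_cond mu nu ->
  (forall A, a \notin A -> b \in neighbours A -> t <= slack mu nu A) ->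
  hall_cond (mu \- dirac a t) (nu \- dirac b t).
Proof.
move=> Eab hall slack_ge B; rewrite !sumrB !sum_dirac.
have [aB|aB] := boolP (a \in B).
  have -> : b \in neighbours B by rewrite inE; apply/existsP; exists a; rewrite aB.
  by rewrite lerD2r.
rewrite subr0; case: ifP => bNB; last by rewrite subr0.
by have := slack_ge B aB bNB; rewrite /slack lerBrDr -lerBrDl.
Qed.

Lemma transport_shift mu nu a b t pi : E a b -> 0 <= t ->
  transport (mu \- dirac a t) (nu \- dirac b t) pi ->
  transport mu nu (fun x y => pi x y + (if (x == a) && (y == b) then t else 0)).
Proof.
move=> Eab t_ge0 tr.
by apply: eq_transport (transport_add tr (transport_dirac Eab t_ge0)) => x /=;
  rewrite subrK.
Qed.

Lemma transport_split A mu nu pi1 pi2 :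
  transport (restrict A mu) (restrict (neighbours A) nu) pi1 ->
  transport (restrict (~: A) mu) (restrict (~: neighbours A) nu) pi2 ->
  transport mu nu (fun x y => pi1 x y + pi2 x y).
Proof.
move=> tr1 tr2.
by apply: eq_transport (transport_add tr1 tr2) => x /=; rewrite add_restrictC.
Qed.

Lemma restrict_ge0 A f : (forall x, 0 <= f x) -> forall x, 0 <= restrict A f x.
Proof. by move=> f_ge0 x; rewrite /restrict; case: ifP. Qed.

Lemma transfer_amount mu nu a b : hall_cond mu nu -> 0 <= mu a -> 0 <= nu b ->
  exists2 t, 0 <= t <= Order.min (mu a) (nu b) &
  (forall A, a \notin A -> b \in neighbours A -> t <= slack mu nu A) /\
  (t = Order.min (mu a) (nu b) \/
   exists A, [/\ a \notin A, b \in neighbours A & t = slack mu nu A]).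
Proof.
move=> hall mu_a nu_b; pose P A := (a \notin A) && (b \in neighbours A).
exists (\big[Order.min/Order.min (mu a) (nu b)]_(A | P A) slack mu nu A).
  rewrite bigmin_le_id andbT; apply: le_bigmin => [|A _]; first by rewrite le_min mu_a.
  by rewrite subr_ge0.
split=> [A aA bNA|]; first by apply: bigmin_le_cond; rewrite /P aA.
have [->|[A /andP [aA bNA] ->]] := bigmin_attained P (slack mu nu) (Order.min (mu a) (nu b)).
  by left.
by right; exists A.
Qed.

Definition transportable_below m := forall mu nu,
  (#|supp mu| + #|supp nu| < m)%N -> (forall x, 0 <= mu x) -> (forall y, 0 <= nu y) ->
  hall_cond mu nu -> exists pi, transport mu nu pi.

(* Both halves are strictly smaller: mu charges the complement of A at x, and
   it charges A because mu(A) = nu(N(A)) >= nu y > 0. *)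
Lemma transport_tight_split m mu nu A x y :
  transportable_below m -> (#|supp mu| + #|supp nu| < m.+1)%N ->
  (forall x, 0 <= mu x) -> (forall y, 0 <= nu y) -> hall_cond mu nu ->
  \sum_(x in A) mu x = \sum_(y in neighbours A) nu y ->
  x \in supp mu -> x \notin A -> y \in neighbours A -> 0 < nu y ->
  exists pi, transport mu nu pi.
Proof.
move=> IH size_lt mu_ge0 nu_ge0 hall tight x_supp xA yNA nu_y.
have [x' x'A x'_supp] : exists2 x', x' \in A & x' \in supp mu.
  have [supp_A0|[x']] := set_0Vmem (supp mu :&: A); last by case/setIP; exists x'.
  have : 0 < \sum_(x in A) mu x by rewrite tight (bigD1 y) //= ltr_pwDl ?sumr_ge0.
  rewrite big1 ?ltxx // => x' x'A; apply/eqP.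
  have : x' \notin supp mu :&: A by rewrite supp_A0 inE.
  by rewrite !inE x'A andbT negbK.
have [pi1 tr1] : exists pi, transport (restrict A mu) (restrict (neighbours A) nu) pi.
  apply: IH; [|exact: restrict_ge0|exact: restrict_ge0|exact: hall_restrict].
  rewrite -ltnS (leq_trans _ size_lt) // ltnS -addSn leq_add //.
    exact: card_supp_restrict_lt xA.
  exact: card_supp_restrict_le.
have [pi2 tr2] : exists pi, transport (restrict (~: A) mu) (restrict (~: neighbours A) nu) pi.
  apply: IH; [|exact: restrict_ge0|exact: restrict_ge0|exact: hall_restrictC].
  rewrite -ltnS (leq_trans _ size_lt) // ltnS -addSn leq_add //.
    by apply: card_supp_restrict_lt x'_supp _; rewrite inE negbK.
  exact: card_supp_restrict_le.
by exists (fun x y => pi1 x y + pi2 x y); apply: transport_split tr1 tr2.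
Qed.

Lemma transportable_step m : transportable_below m -> transportable_below m.+1.
Proof.
move=> IH mu nu size_lt mu_ge0 nu_ge0 hall.
have [supp_mu0|[a a_supp]] := set_0Vmem (supp mu).
  exists (fun _ _ => 0); apply: transport0 => // x.
  have : x \notin supp mu by rewrite supp_mu0 inE.
  by rewrite inE negbK => /eqP.
have mu_a : 0 < mu a by move: a_supp; rewrite inE lt_def mu_ge0 andbT.
have [b Eab nu_b] := hall_edge nu_ge0 hall mu_a.
have b_supp : b \in supp nu by rewrite inE gt_eqF.
have [t /andP [t_ge0]] := transfer_amount hall (ltW mu_a) (ltW nu_b).
rewrite le_min => /andP [t_le_mu t_le_nu] [t_le_slack t_attained].
pose mu' := mu \- dirac a t; pose nu' := nu \- dirac b t.
have mu'_ge0 x : 0 <= mu' x.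
  by rewrite /mu' /= /dirac; case: ifP => [/eqP ->|_]; rewrite ?subr_ge0 ?subr0.
have nu'_ge0 y : 0 <= nu' y.
  by rewrite /nu' /= /dirac; case: ifP => [/eqP ->|_]; rewrite ?subr_ge0 ?subr0.
have hall' : hall_cond mu' nu' by apply: hall_shift.
have size_lt' : (#|supp mu'| + #|supp nu'| < m.+1)%N.
  by rewrite (leq_trans _ size_lt) // ltnS leq_add ?card_supp_subr_dirac_le.
suff [pi tr] : exists pi, transport mu' nu' pi by eexists; exact: transport_shift tr.
have [t_mu|t_mu] := eqVneq t (mu a).
  apply: IH => //; rewrite -ltnS (leq_trans _ size_lt) // ltnS -addSn leq_add //.
    by rewrite /mu' t_mu card_supp_subr_dirac_lt.
  exact: card_supp_subr_dirac_le.
have [t_nu|t_nu] := eqVneq t (nu b).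
  apply: IH => //; rewrite -ltnS (leq_trans _ size_lt) // ltnS -addnS leq_add //.
    exact: card_supp_subr_dirac_le.
  by rewrite /nu' t_nu card_supp_subr_dirac_lt.
case: t_attained => [|[A [aA bNA t_slack]]].
  by rewrite minEle; case: ifP => _ t_eq; [move: t_mu | move: t_nu]; rewrite t_eq eqxx.
apply: (@transport_tight_split m _ _ A a b) => //.
- by rewrite !sumrB !sum_dirac (negbTE aA) bNA t_slack /slack; lra.
- by rewrite inE /mu' /= /dirac eqxx subr_eq0 eq_sym t_mu.
- by rewrite /nu' /= /dirac eqxx subr_gt0 lt_neqAle t_nu t_le_nu.
Qed.

Lemma hall_transport mu nu : (forall x, 0 <= mu x) -> (forall y, 0 <= nu y) ->
  hall_cond mu nu -> exists pi, transport mu nu pi.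
Proof.
have [m size_lt] := ubnP (#|supp mu| + #|supp nu|).
suff : transportable_below m by apply.
by elim: m {size_lt} => [mu' nu'|m IH]; [rewrite ltn0 | exact: transportable_step].
Qed.
End Transport.

(** * Strassen's theorem on a finite poset *)

Section MonotoneCoupling.
Variables (R : realFieldType) (T : finType) (leT : rel T).
Hypotheses (leT_refl : reflexive leT) (leT_trans : transitive leT).

Definition upward_closed (U : {set T}) := forall x y, leT x y -> x \in U -> y \in U.

Lemma neighbours_upward_closed (A : {set T}) : upward_closed (neighbours leT A).
Proof.
move=> x y le_xy; rewrite !inE => /existsP [z /andP [zA le_zx]].
by apply/existsP; exists z; rewrite zA (leT_trans le_zx).
Qed.

Lemma sub_neighbours (A : {set T}) : A \subset neighbours leT A.
Proof. by apply/subsetP=> x xA; rewrite inE; apply/existsP; exists x; rewrite xA leT_refl. Qed.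

Theorem monotone_coupling (mu nu : T -> R) :
  (forall x, 0 <= mu x) -> (forall y, 0 <= nu y) -> \sum_x mu x = \sum_y nu y ->
  (forall U, upward_closed U -> \sum_(x in U) mu x <= \sum_(x in U) nu x) ->
  exists pi, transport leT mu nu pi /\ forall y, \sum_x pi x y = nu y.
Proof.
move=> mu_ge0 nu_ge0 mass dominated.
have hall : hall_cond leT mu nu.
  move=> A; apply: le_trans _ (dominated _ (@neighbours_upward_closed A)).
  exact: ler_sum_subset (sub_neighbours A) mu_ge0.
have [pi [pi_ge0 pi_le rows cols]] := hall_transport mu_ge0 nu_ge0 hall.
exists pi; split=> // y; apply/eqP; rewrite eq_le cols /=.
have deficit_ge0 z : 0 <= nu z - \sum_x pi x z by rewrite subr_ge0.
have /psumr_eq0P deficit0 : \sum_z (nu z - \sum_x pi x z) = 0.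
  by rewrite sumrB exchange_big -mass; under eq_bigr do rewrite rows; rewrite subrr.
by move/eqP: (deficit0 (fun z _ => deficit_ge0 z) y isT); rewrite subr_eq0 eq_sym => /eqP ->.
Qed.
End MonotoneCoupling.

(** * Conditional laws under negative regression *)

Lemma cw_le_refl n (S : {set 'I_n}) : reflexive (@cw_le n S).
Proof. by move=> x; apply/forallP=> j; rewrite implybb. Qed.

Lemma cw_le_trans n (S : {set 'I_n}) : transitive (@cw_le n S).
Proof.
move=> y x z /forallP le_xy /forallP le_yz; apply/forallP=> j.
by apply/implyP=> /(implyP (le_xy j)) /(implyP (le_yz j)).
Qed.

Lemma eq_restr n (S : {set 'I_n}) (w w' : cube n) :
  (restr S w == restr S w') = [forall j in S, w j == w' j].
Proof.
apply/eqP/forall_inP=> [eq_ww' j jS | eq_ww'].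
  by have := congr1 (fun x : subcube S => x (exist _ j jS)) eq_ww'; rewrite !ffunE => ->.
by apply/ffunP=> j; rewrite !ffunE; apply/eqP/eq_ww'/(valP j).
Qed.

Lemma restr_setU1E n (K : {set 'I_n}) (i : 'I_n) (w w' : cube n) :
  (restr (i |: K) w == restr (i |: K) w') = (restr K w == restr K w') && (w i == w' i).
Proof.
rewrite !eq_restr; apply/forall_inP/andP=> [eq_ww'|[/forall_inP eq_K eq_i] j].
  split; last by apply: eq_ww'; rewrite setU11.
  by apply/forall_inP=> j jK; apply: eq_ww'; rewrite setU1r.
by case/setU1P=> [->|]; [exact: eq_i | exact: eq_K].
Qed.

Section Conditioning.
Variables (R : realFieldType) (n : nat) (p : cube n -> R).
Implicit Types (P : pred (cube n)) (w : cube n).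

Lemma Pr_ge0 P : (forall w, 0 <= p w) -> 0 <= Pr p P.
Proof. by move=> p_ge0; apply: sumr_ge0. Qed.

Lemma Pr_gt0_witness P : 0 < Pr p P -> exists w, P w.
Proof.
by have [w Pw|P0] := pickP P; [exists w | rewrite /Pr big_pred0 ?ltxx].
Qed.

Lemma sum_Pr_preimage (S : finType) (f : cube n -> S) P (U : {set S}) :
  \sum_(x in U) Pr p (fun w => (f w == x) && P w) = \sum_(w | P w && (f w \in U)) p w.
Proof.
rewrite [RHS](partition_big f (mem U)) => [|w /andP []//].
apply: eq_bigr => x xU; apply: eq_bigl => w.
by case: eqP => [->|_]; rewrite ?xU ?andbT ?andbF.
Qed.

Lemma condE_indicator (I J : {set 'I_n}) (U : {set subcube I}) (a : subcube J) :
  condE p (fun x => (x \in U)%:R) a =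
  (\sum_(w | (restr J w == a) && (restr I w \in U)) p w) / Pr p (fun w => restr J w == a).
Proof.
rewrite /condE [in RHS]big_mkcondr; congr (_ / _); apply: eq_bigr => w _.
by case: (restr I w \in U); rewrite ?mulr1 ?mulr0.
Qed.

Variables (K : {set 'I_n}) (aK : subcube K) (i : 'I_n).
Let L := ~: (i |: K).
Let event (c : bool) w := (restr K w == aK) && (w i == c).

Lemma sum_mu (c : bool) (U : {set subcube L}) :
  \sum_(x in U) mu p aK i c x = (\sum_(w | event c w && (restr L w \in U)) p w) / Pr p (event c).
Proof. by rewrite -mulr_suml sum_Pr_preimage. Qed.

Lemma mu_ge0 c (x : subcube L) : (forall w, 0 <= p w) -> 0 <= mu p aK i c x.
Proof. by move=> p_ge0; rewrite divr_ge0 ?Pr_ge0. Qed.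

Lemma mu_total c : 0 < Pr p (event c) -> \sum_(x : subcube L) mu p aK i c x = 1.
Proof.
move=> Pr_gt0; have := sum_mu c setT; rewrite (eq_bigl xpredT) => [->|x]; last exact: in_setT.
rewrite -[RHS](divff (lt0r_neq0 Pr_gt0)); congr (_ / _).
by apply: eq_bigl => w; rewrite in_setT andbT.
Qed.

Section Witness.
Variables (c : bool) (w_c : cube n).
Hypotheses (w_cK : restr K w_c = aK) (w_ci : w_c i = c).

Lemma restr_setU1_witness w : (restr (i |: K) w == restr (i |: K) w_c) = event c w.
Proof. by rewrite restr_setU1E w_cK w_ci. Qed.

Lemma Pr_restr_setU1 : Pr p (fun w => restr (i |: K) w == restr (i |: K) w_c) = Pr p (event c).
Proof. exact: eq_bigl restr_setU1_witness. Qed.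

Lemma condE_restr_setU1 (U : {set subcube L}) :
  condE p (fun x => (x \in U)%:R) (restr (i |: K) w_c) = \sum_(x in U) mu p aK i c x.
Proof.
rewrite condE_indicator sum_mu Pr_restr_setU1; congr (_ / _).
by apply: eq_bigl => w; rewrite restr_setU1_witness.
Qed.
End Witness.

(* With J = i |: K, the two conditioning events are {X_J = restr J w_c} for
   witnesses w_c, and restr J w0 <= restr J w1. *)
Lemma mu_upward_closed_le (U : {set subcube L}) :
  negative_regression p -> 0 < Pr p (event false) -> 0 < Pr p (event true) ->
  upward_closed (@cw_le n L) U ->
  \sum_(x in U) mu p aK i true x <= \sum_(x in U) mu p aK i false x.
Proof.
move=> neg_reg Pr0 Pr1 U_up.
have [w0 /andP [/eqP w0K /eqP w0i]] := Pr_gt0_witness Pr0.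
have [w1 /andP [/eqP w1K /eqP w1i]] := Pr_gt0_witness Pr1.
have le01 : cw_le (restr (i |: K) w0) (restr (i |: K) w1).
  apply/forallP=> j; rewrite !ffunE; case/setU1P: (valP j) => [->|jK].
    by rewrite w0i.
  move/eqP: (etrans w0K (esym w1K)); rewrite eq_restr => /forall_inP /(_ _ jK) /eqP ->.
  exact: implybb.
have disj : [disjoint L & i |: K] by rewrite -setI_eq0 setIC setICr.
have ind_up : nondecreasing_fun (fun x : subcube L => (x \in U)%:R : R).
  by move=> x y le_xy; rewrite ler_nat; case xU: (x \in U); rewrite // (U_up x y le_xy xU).
have := neg_reg _ _ disj _ ind_up _ _ le01.
rewrite (Pr_restr_setU1 w0K w0i) (Pr_restr_setU1 w1K w1i).
by rewrite (condE_restr_setU1 w0K w0i) (condE_restr_setU1 w1K w1i); apply.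
Qed.
End Conditioning.

Theorem mainTheorem3 (R : realFieldType) (n : nat) (p : cube n -> R)
  (Hp : is_dist p) (Hnr : negative_regression p)
  (K : {set 'I_n}) (aK : subcube K) (i : 'I_n) (HiK : i \notin K)
  (H0 : 0 < Pr p (fun w => (restr K w == aK) && (w i == false)))
  (H1 : 0 < Pr p (fun w => (restr K w == aK) && (w i == true))) :
  exists nu : subcube (~: (i |: K)) -> subcube (~: (i |: K)) -> R,
    (forall x y, 0 <= nu x y <= 1) /\
    (forall x, mu p aK i true x = \sum_y nu x y) /\
    (forall y, mu p aK i false y = \sum_x nu x y) /\
    (forall x y, ~~ cw_le x y -> nu x y = 0).
Proof.
have [p_ge0 _] := Hp.
pose L := ~: (i |: K).
have mass : \sum_(x : subcube L) mu p aK i true x = \sum_(y : subcube L) mu p aK i false y.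
  by rewrite (mu_total H1) (mu_total H0).
have [pi [[pi_ge0 pi_cw rows _] cols]] :=
  monotone_coupling (@cw_le_refl n L) (@cw_le_trans n L)
    (mu_ge0 aK true ^~ p_ge0) (mu_ge0 aK false ^~ p_ge0) mass
    (fun U U_up => mu_upward_closed_le Hnr H0 H1 U_up).
exists pi; split; last split; last split.
- move=> x y; rewrite pi_ge0 -(mu_total H1).
  apply: le_trans (ler_term_sum y (pi_ge0 x)) _; rewrite rows.
  exact: ler_term_sum (mu_ge0 aK true ^~ p_ge0).
- by move=> x; rewrite rows.
- by move=> y; rewrite cols.
- exact: pi_cw.
Qed.
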